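(* Let $\mu_1,\mu_2$ be compactly supported positive Borel measures on $\mathbb{C}$, both with infinite support, and suppose both $\operatorname{supp}(\mu_1)$ and $\operatorname{supp}(\mu_2)$ are polynomially convex. If $0<\lambda(\mu_1,\mu_2)\le\beta(\mu_1,\mu_2)<\infty$, then $\operatorname{supp}(\mu_1)=\operatorname{supp}(\mu_2)$.
   Context: For positive Borel measures $\mu_1,\mu_2$ on $\mathbb{C}$ with finite moments and $\mu_2$ infinitely supported, $\lambda(\mu_1,\mu_2)=\inf\{\int|p|^2d\mu_1/\int|p|^2d\mu_2 : p\in\mathbb{P}[z]\setminus\{0\}\}$ and $\beta(\mu_1,\mu_2)=\sup\{\int|p|^2d\mu_1/\int|p|^2d\mu_2 : p\in\mathbb{P}[z]\setminus\{0\}\}$ (equivalently, limits of the smallest/largest generalized eigenvalues of the $(n+1)\times(n+1)$ truncations of the moment matrix $\mathbf{M}(\mu_1)=(\int z^i\bar z^jd\mu_1)$ with respect to those of $\mathbf{M}(\mu_2)$). A compact set $K\subset\mathbb{C}$ is polynomially convex if $K=\operatorname{Pc}(K)$, where $\operatorname{Pc}(K)=\{z: |p(z)|\le\max_K|p| \ \forall p\in\mathbb{P}[z]\}$. *)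

From HB Require Import structures.
From mathcomp Require Import all_boot all_order all_algebra.
From mathcomp Require Import all_classical all_reals all_analysis.
From mathcomp.real_closed Require Import complex.
Import Order.TTheory GRing.Theory Num.Theory.
Import numFieldNormedType.Exports.

Set Implicit Arguments.
Unset Strict Implicit.
Unset Printing Implicit Defensive.

Local Open Scope ring_scope.
Local Open Scope classical_set_scope.

(* The complex plane is modelled as R * R (with its product topology and
   product sigma-algebra = Borel sigma-algebra of R^2); [toC] identifies a
   point (x, y) with the complex number x + i y. *)
Definition toC (R : realType) (z : R * R) : R[i] := (z.1 +i* z.2)%C.

Definition cabs (R : realType) (w : R[i]) : R := Normc.normc w.

Definition msupp (R : realType) (mu : {measure set (R * R) -> \bar R})
  : set (R * R) :=
  [set z | forall U : set (R * R), open U -> U z -> (0 < mu U)%E].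

Definition finite_moments (R : realType) (mu : {measure set (R * R) -> \bar R})
  : Prop :=
  forall n : nat, (\int[mu]_z ((cabs (toC z)) ^+ n)%:E < +oo)%E.

Definition L2sq (R : realType) (mu : {measure set (R * R) -> \bar R})
  (p : {poly R[i]}) : \bar R :=
  (\int[mu]_z ((cabs p.[toC z]) ^+ 2)%:E)%E.

(* the Rayleigh quotient  int |p|^2 dmu1 / int |p|^2 dmu2  (both integrals
   are finite real numbers under the standing assumptions) *)
Definition rquot (R : realType) (mu1 mu2 : {measure set (R * R) -> \bar R})
  (p : {poly R[i]}) : \bar R :=
  (fine (L2sq mu1 p) / fine (L2sq mu2 p))%:E.

Definition lambda_mm (R : realType) (mu1 mu2 : {measure set (R * R) -> \bar R})
  : \bar R :=
  ereal_inf [set rquot mu1 mu2 p | p in [set p : {poly R[i]} | p != 0]].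

Definition beta_mm (R : realType) (mu1 mu2 : {measure set (R * R) -> \bar R})
  : \bar R :=
  ereal_sup [set rquot mu1 mu2 p | p in [set p : {poly R[i]} | p != 0]].

Definition Pc (R : realType) (K : set (R * R)) : set (R * R) :=
  [set z | forall p : {poly R[i]},
     cabs p.[toC z] <= sup [set cabs p.[toC w] | w in K]].

Definition poly_convex (R : realType) (K : set (R * R)) : Prop := Pc K = K.

From HB Require Import structures.
From mathcomp Require Import all_boot all_order all_algebra.
From mathcomp Require Import all_classical all_reals all_analysis.
From mathcomp.real_closed Require Import complex.
From mathcomp Require Import lra measurable_realfun.
Import Order.TTheory GRing.Theory Num.Theory.
Import numFieldNormedType.Exports.
Local Open Scope ring_scope.
Local Open Scope classical_set_scope.

Set Implicit Arguments.
Unset Strict Implicit.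
Unset Printing Implicit Defensive.

(* Suppose z0 lies in supp mu1 but not in K = supp mu2.  Since K is
   polynomially convex, some polynomial p has |p(z0)| > S := max_K |p|; pick
   S < s < t < |p(z0)|.  The set U = {|p| > t} is an open neighbourhood of
   z0, so mu1(U) > 0 and  int |p^n|^2 dmu1 >= t^(2n) mu1(U),  whereas
   int |p^n|^2 dmu2 <= s^(2n) mu2(C).  For large n this contradicts
   int |q|^2 dmu1 <= beta int |q|^2 dmu2.  Symmetrically, the bound
   int |q|^2 dmu2 <= lambda^-1 int |q|^2 dmu1 gives supp mu2 <= supp mu1. *)

Section RationalBoxes.
Variable R : realType.

Definition rat_box (q : rat * rat * rat * rat) : set (R * R) :=
  `]ratr q.1.1.1, ratr q.1.1.2[ `*` `]ratr q.1.2, ratr q.2[.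

Lemma measurable_rat_box q : measurable (rat_box q).
Proof. by apply: measurableX; exact: measurable_itv. Qed.

Lemma open_rat_box_subset (U : set (R * R)) z :
  open U -> U z -> exists q, rat_box q z /\ rat_box q `<=` U.
Proof.
move=> oU Uz; have : nbhs z U by apply: open_nbhs_nbhs.
move=> /nbhs_ballP[_/posnumP[e] zeU].
have [a] := @rat_in_itvoo R (z.1 - e%:num) z.1 ltac:(by rewrite ltrBlDr ltrDl).
rewrite in_itv /= => /andP[a1 a2].
have [b] := @rat_in_itvoo R z.1 (z.1 + e%:num) ltac:(by rewrite ltrDl).
rewrite in_itv /= => /andP[b1 b2].
have [c] := @rat_in_itvoo R (z.2 - e%:num) z.2 ltac:(by rewrite ltrBlDr ltrDl).
rewrite in_itv /= => /andP[c1 c2].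
have [d] := @rat_in_itvoo R z.2 (z.2 + e%:num) ltac:(by rewrite ltrDl).
rewrite in_itv /= => /andP[d1 d2].
exists (a, b, c, d); split.
  by split; rewrite /= in_itv /= ?a2 ?b1 ?c2 ?d1.
move=> w [/=]; rewrite !in_itv /= => /andP[w1 w2] /andP[w3 w4].
by apply: zeU; split; rewrite /ball /= ltr_distl; apply/andP; split; lra.
Qed.

Definition rat_box_seq (P : set (R * R) -> Prop) (n : nat) : set (R * R) :=
  if unpickle n is Some q then
    if `[< P (rat_box q) >] then rat_box q else set0
  else set0.

Lemma subset_bigcup_rat_box_seq (U : set (R * R)) (P : set (R * R) -> Prop) :
  (forall z, U z -> exists q, rat_box q z /\ P (rat_box q)) ->
  U `<=` \bigcup_n rat_box_seq P n.
Proof.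
move=> H z /H[q [qz Pq]]; exists (pickle q); first exact: I.
by rewrite /rat_box_seq pickleK; case: asboolP => [_|/(_ Pq) []].
Qed.

(* [R * R] carries the product sigma-algebra, so measurability of open sets
   goes through their decomposition into countably many rational boxes. *)
Lemma open_measurable_pair (U : set (R * R)) : open U -> measurable U.
Proof.
move=> oU; have -> : U = \bigcup_n rat_box_seq (fun B => B `<=` U) n.
  apply/seteqP; split.
    apply: subset_bigcup_rat_box_seq => z Uz.
    by have [q [? ?]] := open_rat_box_subset oU Uz; exists q.
  move=> z [n _]; rewrite /rat_box_seq; case: unpickle => [q|[]].
  by case: asboolP => [+ qz|_ []]; apply.
apply: bigcupT_measurable => n; rewrite /rat_box_seq.
case: unpickle => [q|]; last exact: measurable0.
by case: asboolP => _; [exact: measurable_rat_box|exact: measurable0].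
Qed.

(* The complement of the support is covered by countably many rational boxes,
   each contained in an open null set. *)
Lemma negligible_outside_msupp (mu : {measure set (R * R) -> \bar R})
    (A : set (R * R)) :
  A `<=` ~` msupp mu -> mu.-negligible A.
Proof.
move=> A_supp.
pose null_box B := exists W, [/\ open W, mu W = 0%E & B `<=` W].
apply: (@negligibleS _ _ _ _ (\bigcup_n rat_box_seq null_box n)).
  apply: subset_bigcup_rat_box_seq => z /A_supp.
  move=> /existsNP[W] /not_implyP[oW] /not_implyP[Wz] /negP.
  rewrite -leNgt => W0; have [q [qz qW]] := open_rat_box_subset oW Wz.
  exists q; split => //; exists W; split => //.
  by apply/le_anti; rewrite W0 measure_ge0.
apply: negligible_bigcup => n; rewrite /rat_box_seq.
case: unpickle => [q|]; last exact: negligible_set0.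
case: asboolP => [[W [oW W0 qW]]|_]; last exact: negligible_set0.
by exists W; split => //; exact: open_measurable_pair.
Qed.

End RationalBoxes.

Section PolyModulus.
Variable R : realType.
Implicit Types (w : R[i]) (p : {poly R[i]}) (z : R * R).

Lemma Re_add w1 w2 :
  complex.Re (w1 + w2) = complex.Re w1 + complex.Re w2.
Proof. by case: w1 => ? ?; case: w2. Qed.

Lemma Im_add w1 w2 :
  complex.Im (w1 + w2) = complex.Im w1 + complex.Im w2.
Proof. by case: w1 => ? ?; case: w2. Qed.

Lemma Re_mul w1 w2 :
  complex.Re (w1 * w2) =
  complex.Re w1 * complex.Re w2 - complex.Im w1 * complex.Im w2.
Proof. by case: w1 => ? ?; case: w2. Qed.

Lemma Im_mul w1 w2 :
  complex.Im (w1 * w2) =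
  complex.Re w1 * complex.Im w2 + complex.Im w1 * complex.Re w2.
Proof. by case: w1 => ? ?; case: w2. Qed.

Lemma cabs_ge0 w : 0 <= cabs w.
Proof. by case: w => a b; exact: sqrtr_ge0. Qed.

Lemma cabsX w n : cabs (w ^+ n) = cabs w ^+ n.
Proof.
rewrite /cabs; elim: n => [|n IHn].
  by rewrite !expr0; exact: Normc.normc1.
by rewrite !exprS Normc.normcM IHn.
Qed.

Definition poly_re p z : R := complex.Re p.[toC z].
Definition poly_im p z : R := complex.Im p.[toC z].

Lemma continuous_measurable_poly_re_im p :
  [/\ continuous (poly_re p), continuous (poly_im p),
      measurable_fun setT (poly_re p) & measurable_fun setT (poly_im p)].
Proof.
have fst_cont : continuous (@fst R R) by move=> z; exact: cvg_fst.
have snd_cont : continuous (@snd R R) by move=> z; exact: cvg_snd.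
elim/poly_ind: p => [|p c [cre cim mre mim]].
  have -> : poly_re 0 = cst 0 by apply/funext => z; rewrite /poly_re horner0.
  have -> : poly_im 0 = cst 0 by apply/funext => z; rewrite /poly_im horner0.
  by split; solve [move=> ?; exact: cst_continuous|exact: measurable_cst].
have -> : poly_re (p * 'X + c%:P) =
    poly_re p \* fst \- poly_im p \* snd \+ cst (complex.Re c).
  by apply/funext => z; rewrite /poly_re /poly_im hornerMXaddC Re_add Re_mul.
have -> : poly_im (p * 'X + c%:P) =
    poly_re p \* snd \+ poly_im p \* fst \+ cst (complex.Im c).
  by apply/funext => z; rewrite /poly_re /poly_im hornerMXaddC Im_add Im_mul.
split.
- move=> z; apply: continuousD; last exact: cst_continuous.
  by apply: continuousB; apply: continuousM;
    [exact: cre|exact: fst_cont|exact: cim|exact: snd_cont].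
- move=> z; apply: continuousD; last exact: cst_continuous.
  by apply: continuousD; apply: continuousM;
    [exact: cre|exact: snd_cont|exact: cim|exact: fst_cont].
- apply: measurable_funD; last exact: measurable_cst.
  by apply: measurable_funB; apply: measurable_funM;
    [exact: mre|exact: measurable_fst|exact: mim|exact: measurable_snd].
- apply: measurable_funD; last exact: measurable_cst.
  by apply: measurable_funD; apply: measurable_funM;
    [exact: mre|exact: measurable_snd|exact: mim|exact: measurable_fst].
Qed.

Definition sqmod p z : R := cabs p.[toC z] ^+ 2.

Lemma sqmodE p : sqmod p = poly_re p \* poly_re p \+ poly_im p \* poly_im p.
Proof.
apply/funext => z; rewrite /sqmod /poly_re /poly_im /=.
case: p.[toC z] => a b /=.
by rewrite sqr_sqrtr ?addr_ge0 ?sqr_ge0 // !expr2.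
Qed.

Lemma sqmod_ge0 p z : 0 <= sqmod p z.
Proof. exact: sqr_ge0. Qed.

Lemma sqmod0 z : sqmod 0 z = 0.
Proof.
have cabs0 : cabs (0 : R[i]) = 0 by exact: Normc.normc0.
by rewrite /sqmod horner0 cabs0 expr0n.
Qed.

Lemma sqmodX p n z : sqmod (p ^+ n) z = sqmod p z ^+ n.
Proof. by rewrite /sqmod horner_exp cabsX -!exprM mulnC. Qed.

Lemma continuous_sqmod p : continuous (sqmod p).
Proof.
have [cre cim _ _] := continuous_measurable_poly_re_im p.
rewrite sqmodE => z; apply: continuousD; apply: continuousM;
  [exact: cre|exact: cre|exact: cim|exact: cim].
Qed.

Lemma measurable_sqmodX p n (D : set (R * R)) :
  measurable_fun D (fun z => (sqmod p z ^+ n)%:E).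
Proof.
have [_ _ mre mim] := continuous_measurable_poly_re_im p.
apply/measurable_EFinP; apply: measurable_funX; apply: measurable_funTS.
by rewrite sqmodE; apply: measurable_funD; apply: measurable_funM.
Qed.

End PolyModulus.

Section L2Bounds.
Variable R : realType.
Variable mu : {measure set (R * R) -> \bar R}.
Implicit Types p : {poly R[i]}.

Lemma L2sq_ge0 p : (0 <= L2sq mu p)%E.
Proof. by apply: integral_ge0 => z _; rewrite lee_fin sqmod_ge0. Qed.

Lemma L2sq1 : L2sq mu 1 = mu setT.
Proof.
rewrite /L2sq (eq_integral (cst 1%E)) ?integral_cst ?mul1e // => z _.
have cabs1 : cabs (1 : R[i]) = 1 by exact: Normc.normc1.
by rewrite hornerC cabs1 expr1n.
Qed.

Lemma L2sqX p n : L2sq mu (p ^+ n) = (\int[mu]_z (sqmod p z ^+ n)%:E)%E.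
Proof. by apply: eq_integral => z _; rewrite -sqmodX. Qed.

Lemma L2sqX_ge p n (c : R) (U : set (R * R)) : 0 <= c -> measurable U ->
  (forall z, U z -> c <= sqmod p z) ->
  ((c ^+ n)%:E * mu U <= L2sq mu (p ^+ n))%E.
Proof.
move=> c0 mU cU; rewrite L2sqX -integral_cst //.
apply: (@le_trans _ _ (\int[mu]_(z in U) (sqmod p z ^+ n)%:E)%E).
  apply: ge0_le_integral => //.
  - by move=> z _; rewrite lee_fin exprn_ge0.
  - exact: measurable_sqmodX.
  - move=> z Uz; rewrite lee_fin; apply: lerXn2r;
      by rewrite ?nnegrE ?sqmod_ge0 ?cU.
apply: ge0_subset_integral => //; first exact: measurable_sqmodX.
by move=> z _; rewrite lee_fin exprn_ge0 // sqmod_ge0.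
Qed.

Lemma L2sqX_le p n (c : R) : 0 <= c ->
  (forall z, msupp mu z -> sqmod p z <= c) ->
  (L2sq mu (p ^+ n) <= (c ^+ n)%:E * mu setT)%E.
Proof.
move=> c0 pc; rewrite L2sqX -integral_cst //.
apply: ae_ge0_le_integral => //.
- by move=> z _; rewrite lee_fin exprn_ge0 // sqmod_ge0.
- exact: measurable_sqmodX.
- by move=> z _; rewrite lee_fin exprn_ge0.
apply: negligible_outside_msupp => z /= + /pc pzc; apply => _.
by rewrite lee_fin; apply: lerXn2r; rewrite ?nnegrE ?sqmod_ge0.
Qed.

End L2Bounds.

Lemma ler_bernoulli (R : realFieldType) (h : R) n :
  0 <= h -> 1 + n%:R * h <= (1 + h) ^+ n.
Proof.
move=> h0; elim: n => [|n IHn]; first by rewrite mul0r addr0 expr0.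
by rewrite exprS -natr1; have : 0 <= (n%:R : R) by []; nra.
Qed.

Lemma geometric_not_dominated (R : archiRealFieldType) (s t u C : R) :
  0 < s -> s < t -> 0 < u -> ~ (forall n, t ^+ n * u <= C * s ^+ n).
Proof.
move=> s0 st u0 dom; pose h := t / s - 1.
have h0 : 0 < h by rewrite subr_gt0 ltr_pdivlMr // mul1r.
have linear_bound n : n%:R * (h * u) <= C.
  have ratio : (1 + h) ^+ n = t ^+ n / s ^+ n.
    by rewrite /h addrC subrK exprMn exprVn.
  have : (1 + h) ^+ n * u <= C.
    by rewrite ratio mulrAC ler_pdivrMr ?exprn_gt0.
  have := ler_bernoulli n (ltW h0); have : 0 <= (n%:R : R) by [].
  nra.
have hu : 0 < h * u by rewrite mulr_gt0.
pose N := Num.bound `|C / (h * u)|.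
have := linear_bound N; rewrite -ler_pdivlMr //.
have := archi_boundP (normr_ge0 (C / (h * u))); have := ler_norm (C / (h * u)).
lra.
Qed.

Lemma cabs_poly_le_sup (R : realType) (K : set (R * R)) (p : {poly R[i]}) w :
  compact K -> K w -> cabs p.[toC w] <= sup [set cabs p.[toC v] | v in K].
Proof.
move=> cK Kw; apply: sup_upper_bound; last by exists w.
split; first by exists (cabs p.[toC w]), w.
have cpK : compact (sqmod p @` K).
  apply: continuous_compact => //.
  exact/continuous_subspaceT/continuous_sqmod.
have [M [_ Mbnd]] := compact_bounded cpK.
exists (`|M| + 2) => _ [v Kv <-].
have := Mbnd (`|M| + 1) ltac:(by rewrite (le_lt_trans (ler_norm M)) ?ltrDl).
move=> /(_ (sqmod p v) (ex_intro2 _ _ v Kv erefl)) /= /(le_trans (ler_norm _)).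
rewrite /sqmod; have := sqr_ge0 (cabs p.[toC v] - 1).
have := cabs_ge0 p.[toC v]; nra.
Qed.

Lemma poly_convex_separation (R : realType) (K : set (R * R)) z :
  compact K -> K !=set0 -> poly_convex K -> ~ K z ->
  exists p s t, [/\ 0 < s, s < t,
    (forall w, K w -> sqmod p w <= s) & t < sqmod p z].
Proof.
move=> cK [w0 Kw0] pcK nKz; have : ~ Pc K z by rewrite pcK.
move=> /existsNP[p] /negP; rewrite -ltNge.
set S := sup _; set a := cabs _ => Sa.
have pS w : K w -> cabs p.[toC w] <= S by apply: cabs_poly_le_sup.
have S0 : 0 <= S := le_trans (cabs_ge0 _) (pS w0 Kw0).
exists p, (((2 * S + a) / 3) ^+ 2), (((S + 2 * a) / 3) ^+ 2); split.
- by rewrite exprn_gt0 //; lra.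
- by rewrite ltrXn2r ?nnegrE //; lra.
- move=> w /pS pwS; apply: lerXn2r; rewrite ?nnegrE ?cabs_ge0 //; lra.
- by rewrite /sqmod -/a ltrXn2r ?nnegrE ?cabs_ge0 //; lra.
Qed.

Lemma msupp_subset_of_L2sq_le (R : realType)
    (mu1 mu2 : {measure set (R * R) -> \bar R}) (C : R) :
  0 <= C -> (mu2 setT < +oo)%E ->
  (forall p, p != 0 -> (L2sq mu1 p <= C%:E * L2sq mu2 p)%E) ->
  msupp mu2 !=set0 -> compact (msupp mu2) -> poly_convex (msupp mu2) ->
  msupp mu1 `<=` msupp mu2.
Proof.
move=> C0 mu2_fin le12 K2_0 cK2 pcK2 z K1z; apply: contrapT => nK2z.
have [p [s [t [s0 st sK2 tz]]]] := poly_convex_separation cK2 K2_0 pcK2 nK2z.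
have p0 : p != 0.
  by apply: contraTneq tz => ->; rewrite sqmod0 -leNgt ltW // (lt_trans s0).
pose U := sqmod p @^-1` `]t, +oo[.
have oU : open U.
  apply: open_comp; last exact: interval_open.
  by move=> w _; exact: continuous_sqmod.
have mU : measurable U := open_measurable_pair oU.
have mu1U0 : (0 < mu1 U)%E by apply: K1z => //; rewrite /U /= in_itv /= tz.
have mu1U_fin : mu1 U \is a fin_num.
  have mu1U_le : (mu1 U <= mu1 setT)%E.
    by apply: le_measure; [rewrite inE|rewrite inE|exact: subsetT].
  rewrite ge0_fin_numE ?measure_ge0 //; apply: le_lt_trans mu1U_le _.
  rewrite -L2sq1; apply: le_lt_trans (le12 _ (oner_neq0 _)) _.
  by rewrite L2sq1 lte_mul_pinfty ?lee_fin.
have mu2_fin_num : mu2 setT \is a fin_num by rewrite ge0_fin_numE ?measure_ge0.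
apply: (@geometric_not_dominated _ s t (fine (mu1 U)) (C * fine (mu2 setT))).
- exact: s0.
- exact: st.
- by rewrite fine_gt0 // mu1U0 ltey_eq mu1U_fin.
move=> n; rewrite -lee_fin !EFinM !fineK // -muleA (muleC (mu2 _)).
have tU w : U w -> t <= sqmod p w by rewrite /U /= in_itv /= andbT => /ltW.
have t0 : 0 <= t by rewrite ltW // (lt_trans s0).
apply: le_trans (L2sqX_ge mu1 n t0 mU tU) _.
apply: le_trans (le12 _ (expf_neq0 n p0)) _.
by apply: lee_wpmul2l; [rewrite lee_fin|exact: L2sqX_le (ltW s0) sK2].
Qed.

Lemma gt0_fineK (R : realType) (x : \bar R) : 0 < fine x -> (fine x)%:E = x.
Proof. by case: x => [r| |] //=; rewrite ltxx. Qed.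

Lemma L2sq_le_of_rquot_bounds (R : realType)
    (mu1 mu2 : {measure set (R * R) -> \bar R}) (l b : R) (p : {poly R[i]}) :
  0 < l -> (l%:E <= rquot mu1 mu2 p <= b%:E)%E ->
  [/\ (L2sq mu2 p < +oo)%E, (L2sq mu1 p <= b%:E * L2sq mu2 p)%E
    & (L2sq mu2 p <= l^-1%:E * L2sq mu1 p)%E].
Proof.
move=> l0; rewrite /rquot !lee_fin => /andP[].
set A := fine (L2sq mu1 p); set B := fine (L2sq mu2 p) => lAB ABb.
have B0 : 0 < B.
  rewrite lt_neqAle fine_ge0 ?L2sq_ge0 // andbT; apply: contraTneq lAB => <-.
  by rewrite invr0 mulr0 -ltNge.
move: lAB ABb; rewrite ler_pdivlMr // ler_pdivrMr // => lAB ABb.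
have A0 : 0 < A by apply: lt_le_trans lAB; rewrite mulr_gt0.
rewrite -(gt0_fineK A0) -(gt0_fineK B0) -!EFinM !lee_fin ltry; split => //.
by rewrite ler_pdivlMl.
Qed.

Theorem corollary2 (R : realType) (mu1 mu2 : {measure set (R * R) -> \bar R}) :
  finite_moments mu1 -> finite_moments mu2 ->
  compact (msupp mu1) -> compact (msupp mu2) ->
  infinite_set (msupp mu1) -> infinite_set (msupp mu2) ->
  poly_convex (msupp mu1) -> poly_convex (msupp mu2) ->
  (0 < lambda_mm mu1 mu2)%E -> (lambda_mm mu1 mu2 <= beta_mm mu1 mu2)%E ->
  (beta_mm mu1 mu2 < +oo)%E ->
  msupp mu1 = msupp mu2.
Proof.
move=> _ _ cK1 cK2 infK1 infK2 pcK1 pcK2 lambda0 lambda_beta betaoo.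
have lambda_fin : lambda_mm mu1 mu2 \is a fin_num.
  by rewrite gt0_fin_numE // (le_lt_trans lambda_beta).
have beta_fin : beta_mm mu1 mu2 \is a fin_num.
  by rewrite gt0_fin_numE // (lt_le_trans lambda0).
pose l := fine (lambda_mm mu1 mu2); pose b := fine (beta_mm mu1 mu2).
have l0 : 0 < l by rewrite fine_gt0 // lambda0 ltey_eq lambda_fin.
have b0 : 0 < b by rewrite fine_gt0 // (lt_le_trans lambda0) ?ltey_eq ?beta_fin.
have bounds p : p != 0 -> [/\ (L2sq mu2 p < +oo)%E,
    (L2sq mu1 p <= b%:E * L2sq mu2 p)%E
  & (L2sq mu2 p <= l^-1%:E * L2sq mu1 p)%E].
  move=> p0; apply: L2sq_le_of_rquot_bounds => //.
  rewrite /l /b !fineK //; apply/andP; split.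
  - by apply: ereal_inf_lbound; exists p.
  - by apply: ereal_sup_ubound; exists p.
have [mu2_fin mu12 _] := bounds 1 (oner_neq0 _).
rewrite L2sq1 in mu2_fin.
have mu1_fin : (mu1 setT < +oo)%E.
  by rewrite -L2sq1 (le_lt_trans mu12) // lte_mul_pinfty ?lee_fin ?ltW // L2sq1.
apply/seteqP; split.
- apply: (@msupp_subset_of_L2sq_le _ _ _ b) => //.
  + exact: ltW.
  + by move=> p /bounds[].
  + exact: infinite_setN0.
- apply: (@msupp_subset_of_L2sq_le _ _ _ l^-1) => //.
  + by rewrite invr_ge0 ltW.
  + by move=> p /bounds[].
  + exact: infinite_setN0.
Qed.
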